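(* Let $k,l,m$ be positive integers and let $G=G(k,l,m)$ be the tree defined as follows: start with a vertex $y$; add vertices $x_1,\dots,x_k$ each adjacent to $y$; for each $a\in\{1,\dots,k\}$ add vertices $w_{a,1},\dots,w_{a,l}$ each adjacent to $x_a$; for each $a,b$ add a vertex $v_{a,b}$ adjacent to $w_{a,b}$; and for each $a,b$ add $m$ leaves $u_{a,b,1},\dots,u_{a,b,m}$ adjacent to $v_{a,b}$. Then $n(G)=klm+2kl+k+1$, $\gamma_t(G)=2kl+1$, and $\Gamma_t(G)=k\big((m+1)^l-m^l\big)^k$.
   Context: For a graph $G$ without isolated vertices, a set $D\subseteq V(G)$ is total dominating if every vertex of $G$ has a neighbour in $D$. The total domination number $\gamma_t(G)$ is the minimum size of a total dominating set, and $\Gamma_t(G)$ is the number of total dominating sets of size $\gamma_t(G)$. $n(G)$ is the number of vertices. *)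

From mathcomp Require Import all_boot.
Set Implicit Arguments. Unset Strict Implicit. Unset Printing Implicit Defensive.

(* A simple graph: vertex set a finType T, adjacency a relation e : rel T
   (intended symmetric and irreflexive). *)

Definition total_dominating (T : finType) (e : rel T) (D : {set T}) : bool :=
  [forall v : T, [exists u in D, e v u]].

(* total domination number: minimum size of a total dominating set
   (defaults to #|T| if there is none, which never happens without
   isolated vertices). *)
Definition gamma_t (T : finType) (e : rel T) : nat :=
  \big[minn/#|T|]_(D : {set T} | total_dominating e D) #|D|.

Definition Gamma_t (T : finType) (e : rel T) : nat :=
  #|[set D : {set T} | total_dominating e D & #|D| == gamma_t e]|.

(* Vertices:
     Y            = inl (inl (inl (inl tt)))
     X a          = inl (inl (inl (inr a)))
     W (a,b)      = inl (inl (inr (a,b)))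
     V (a,b)      = inl (inr (a,b))
     U (a,b,c)    = inr (a,b,c)                                    *)
Definition Gvtx (k l m : nat) : finType :=
  (unit + 'I_k + ('I_k * 'I_l) + ('I_k * 'I_l) + ('I_k * 'I_l * 'I_m))%type.

Definition Gpar (k l m : nat) (x : Gvtx k l m) : option (Gvtx k l m) :=
  match x with
  | inl (inl (inl (inl _))) => None
  | inl (inl (inl (inr a))) => Some (inl (inl (inl (inl tt))))
  | inl (inl (inr (a, b))) => Some (inl (inl (inl (inr a))))
  | inl (inr (a, b)) => Some (inl (inl (inr (a, b))))
  | inr (a, b, c) => Some (inl (inr (a, b)))
  end.

Definition Gadj (k l m : nat) : rel (Gvtx k l m) :=
  fun x y => (Gpar x == Some y) || (Gpar y == Some x).

From mathcomp Require Import all_boot order zify.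
Set Implicit Arguments. Unset Strict Implicit. Unset Printing Implicit Defensive.
Import Order.TTheory.

(* A total dominating set D of G(k,l,m) contains every v_{a,b} (the only
   neighbour of the leaves u_{a,b,c}), some x_a (to dominate y) and, for each
   pair (a,b), w_{a,b} or some u_{a,b,c} (to dominate v_{a,b}); also x_a needs
   y or some w_{a,b} in D.  Hence |D| >= 1 + 2kl, with equality exactly when
   y is not in D, D contains a single x_a, and each pair (a,b) contributes
   v_{a,b} plus exactly one of w_{a,b}, u_{a,b,1}, ..., u_{a,b,m}; since y is
   then missing, every a must use w_{a,b} for at least one b.  A minimum set is
   therefore a choice of a (k ways) and, for each a, a map from {1..l} to
   {w, u_1, ..., u_m} hitting w at least once ((m+1)^l - m^l ways). *)

Lemma gamma_t_eq (T : finType) (e : rel T) (D0 : {set T}) g :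
  total_dominating e D0 -> #|D0| = g ->
  (forall D, total_dominating e D -> g <= #|D|) -> gamma_t e = g.
Proof.
move=> tdD0 <- lb; rewrite /gamma_t -minEnat; apply/anti_leq/andP; split.
  by rewrite -leEnat; exact: bigmin_le_cond.
by rewrite -leEnat; apply: le_bigmin => [|D /lb]; rewrite leEnat // max_card.
Qed.

Lemma card_ffun_has_None (I J : finType) :
  #|[set g : {ffun I -> option J} | [exists i, g i == None]]|
    = #|J|.+1 ^ #|I| - #|J| ^ #|I|.
Proof.
set S := [set g | _].
have cardCS : #|~: S| = #|J| ^ #|I|.
  have -> : #|J| = #|predC1 (None : option J)| by rewrite cardC1 card_option.
  rewrite -card_ffun_on; apply: eq_card => g.
  rewrite !inE negb_exists; apply/forallP/ffun_onP => gP i; have := gP i;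
  by rewrite inE.
by rewrite -cardCS -card_option -card_ffun -(cardsC S) addnK.
Qed.

Lemma pick_of_sum_eq1 (I : finType) (w : bool) (u : pred I) :
  w + \sum_i u i = 1 ->
  w = ([pick i | u i] == None) /\ forall i, u i = ([pick i | u i] == Some i).
Proof.
case: pickP => [i0 ui0|u0]; last first.
  by rewrite big1 => [|i _]; [case: w | rewrite u0].
rewrite (bigD1 i0) //= ui0 addnA addn1 => /eqP; rewrite eqSS addn_eq0.
case/andP=> w0; rewrite sum_nat_eq0 => /forall_inP u1.
split=> [|i]; first by case: w w0.
rewrite (inj_eq Some_inj); case: (eqVneq i0 i) => [<- //|ne].
have := u1 i; rewrite eq_sym ne => /(_ isT); by case: (u i).
Qed.

Section Tree.

Variables k l m : nat.
Notation T := (Gvtx k l m).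

Local Notation vy := (inl (inl (inl (inl tt))) : T).
Local Notation vx a := (inl (inl (inl (inr a))) : T).
Local Notation vw a b := (inl (inl (inr (a, b))) : T).
Local Notation vv a b := (inl (inr (a, b)) : T).
Local Notation vu a b c := (inr (a, b, c) : T).

Lemma card_Gvtx : #|T| = k * l * m + 2 * k * l + k + 1.
Proof. rewrite !card_sum !card_prod card_unit !card_ord; lia. Qed.

Definition dominated (D : {set T}) (v : T) : bool :=
  match v with
  | inl (inl (inl (inl _))) => [exists a, vx a \in D]
  | inl (inl (inl (inr a))) => (vy \in D) || [exists b, vw a b \in D]
  | inl (inl (inr (a, b))) => (vx a \in D) || (vv a b \in D)
  | inl (inr (a, b)) => (vw a b \in D) || [exists c, vu a b c \in D]
  | inr (a, b, c) => vv a b \in D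
  end.

Lemma has_Gadj_in (D : {set T}) (v : T) :
  [exists u in D, Gadj v u] = dominated D v.
Proof.
rewrite /Gadj; apply/exists_inP/idP.
- case: v => [[[[[]|a]|[a b]]|[a b]]|[[a b] c]];
  case=> -[[[[[]|a']|[a' b']]|[a' b']]|[[a' b'] c']] uD /orP[]/eqP //= E;
  (try case: E); intros; subst; rewrite ?uD ?orbT //.
  + by apply/existsP; exists a'.
  + by apply/orP; right; apply/existsP; exists b'.
  + by apply/orP; right; apply/existsP; exists c'.
- case: v => [[[[[]|a]|[a b]]|[a b]]|[[a b] c]] /=.
  + by case/existsP=> a xD; exists (vx a); rewrite //= eqxx orbT.
  + case/orP=> [yD|/existsP[b wD]]; [exists vy | exists (vw a b)];
    by rewrite //= eqxx ?orbT.
  + case/orP=> [xD|vD]; [exists (vx a) | exists (vv a b)];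
    by rewrite //= eqxx ?orbT.
  + case/orP=> [wD|/existsP[c uD]]; [exists (vw a b) | exists (vu a b c)];
    by rewrite //= eqxx ?orbT.
  + by exists (vv a b); rewrite //= eqxx.
Qed.

Definition Gtotal_dom (D : {set T}) : bool :=
  [&& [exists a, vx a \in D],
      [forall a, (vy \in D) || [exists b, vw a b \in D]],
      [forall a, forall b, (vw a b \in D) || [exists c, vu a b c \in D]]
    & [forall a, forall b, vv a b \in D]].

(* The condition at w_{a,b} is dropped: v_{a,b} dominates it, and v_{a,b} is
   forced into D by its leaves, of which there is at least one as m > 0. *)
Lemma total_dominating_GE (D : {set T}) : 0 < m ->
  total_dominating (@Gadj k l m) D = Gtotal_dom D.
Proof.
move=> m_gt0; rewrite /total_dominating.
under eq_forallb do rewrite has_Gadj_in.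
apply/forallP/and4P => [dom | [xD yD wuD vD]].
  split; [exact: dom vy | apply/forallP=> a; exact: dom (vx a) | |];
  apply/forallP=> a; apply/forallP=> b; [exact: dom (vv a b) | ].
  exact: dom (vu a b (Ordinal m_gt0)).
case=> [[[[[]|a]|[a b]]|[a b]]|[[a b] c]] //=.
- exact: forallP yD a.
- by rewrite (forallP (forallP vD a) b) orbT.
- exact: forallP (forallP wuD a) b.
- exact: forallP (forallP vD a) b.
Qed.

Definition block (D : {set T}) (a : 'I_k) (b : 'I_l) : nat :=
  (vw a b \in D) + (vv a b \in D) + \sum_c (vu a b c \in D).

Lemma card_Gset (D : {set T}) :
  #|D| = (vy \in D) + \sum_a (vx a \in D) + \sum_(p : 'I_k * 'I_l) block D p.1 p.2.
Proof.
rewrite -sum1_card big_mkcond !big_sumType (big_pred1 tt) /= -?addnA; last by case.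
rewrite !big_split /= pair_bigA /=; congr (_ + (_ + _)).
by rewrite addnA; congr (_ + _ + _); apply: eq_bigr => -[[]].
Qed.

Lemma sum_pairs_2 : \sum_(p : 'I_k * 'I_l) 2 = 2 * k * l.
Proof. by rewrite sum_nat_const card_prod !card_ord mulnC mulnA. Qed.

Lemma block_ge2 (D : {set T}) a b : Gtotal_dom D -> 2 <= block D a b.
Proof.
case/and4P=> _ _ /forallP/(_ a)/forallP/(_ b) wuD /forallP/(_ a)/forallP/(_ b) vD.
rewrite /block vD; case/orP: wuD => [-> //|/existsP[c uD]].
by rewrite (bigD1 c) //= uD; lia.
Qed.

Lemma Gtotal_dom_card (D : {set T}) : Gtotal_dom D ->
  2 * k * l + 1 <= #|D| ?= iff [&& vy \notin D, \sum_a (vx a \in D) == 1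
                                & [forall p : 'I_k * 'I_l, block D p.1 p.2 == 2]].
Proof.
move=> tdD; have x_ge1 : 1 <= \sum_a (vx a \in D).
  by case/and4P: tdD => /existsP[a xD] _ _ _; rewrite (bigD1 a) //= xD.
rewrite -sum_pairs_2 addnC -[1]add0n.
have -> : (vy \notin D) = (0 == (vy \in D)) by case: (vy \in D).
rewrite [#|D|]card_Gset andbA [\sum_a _ == 1]eq_sym.
apply: leqif_add; first by apply: leqif_add; apply: leqif_eq.
by apply: leqif_sum => p _; split; [exact: block_ge2 | exact: eq_sym].
Qed.

(* A selection [(a0, f)] describes the set containing [v_{a,b}] for all [a, b],
   the single vertex [x_{a0}], and in each pair [(a, b)] either [w_{a,b}]
   (when [f a b = None]) or [u_{a,b,c}] (when [f a b = Some c]). *)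
Definition selection := ('I_k * {ffun 'I_k -> {ffun 'I_l -> option 'I_m}})%type.

Definition admissible : {set selection} :=
  [set s : selection | [forall a, exists b, s.2 a b == None]].

Definition tdset (s : selection) : {set T} :=
  [set v : T | match v with
               | inl (inl (inl (inl _))) => false
               | inl (inl (inl (inr a))) => a == s.1
               | inl (inl (inr (a, b))) => s.2 a b == None
               | inl (inr _) => true
               | inr (a, b, c) => s.2 a b == Some c
               end].

Lemma tdset_Gtotal_dom s : s \in admissible -> Gtotal_dom (tdset s).
Proof.
rewrite inE => /forallP adm; apply/and4P; split.
- by apply/existsP; exists s.1; rewrite inE /=.
- apply/forallP=> a; have /existsP[b wb] := adm a.
  by rewrite inE /=; apply/existsP; exists b; rewrite inE.
- apply/forallP=> a; apply/forallP=> b; rewrite inE /=.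
  case sab: (s.2 a b) => [c|//] /=.
  by apply/existsP; exists c; rewrite inE /= sab.
- by apply/forallP=> a; apply/forallP=> b; rewrite inE.
Qed.

Lemma card_tdset s : #|tdset s| = 2 * k * l + 1.
Proof.
rewrite card_Gset inE add0n addnC.
have -> : \sum_a (vx a \in tdset s) = 1.
  rewrite (bigD1 s.1) //= inE eqxx big1 // => a.
  by move=> /negPf ne; rewrite inE /= ne.
congr (_ + _); rewrite -sum_pairs_2; apply: eq_bigr => -[a b] _.
rewrite /block !inE /=.
under eq_bigr do rewrite inE /=.
case: (s.2 a b) => [c|]; last by rewrite big1.
rewrite (bigD1 c) //= eqxx big1 // => c'.
by move=> ne; rewrite (inj_eq Some_inj) eq_sym (negPf ne).
Qed.

Lemma tdset_inj : injective tdset.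
Proof.
move=> [a1 f1] [a2 f2] /setP eq12.
have <- : a1 = a2 by have := eq12 (vx a1); rewrite !inE eqxx => /esym/eqP.
congr pair; apply/ffunP=> a; apply/ffunP=> b.
case f1ab: (f1 a b) => [c|].
- by have := eq12 (vu a b c); rewrite !inE /= f1ab eqxx => /esym/eqP.
- by have := eq12 (vw a b); rewrite !inE /= f1ab eqxx => /esym/eqP.
Qed.

Lemma Gtotal_dom_min (D : {set T}) : Gtotal_dom D -> #|D| = 2 * k * l + 1 ->
  exists2 s, s \in admissible & D = tdset s.
Proof.
move=> tdD cardD; have := (Gtotal_dom_card tdD).2; rewrite cardD eqxx.
case/esym/and3P=> yD /sum_nat_eq1[a0 [_ xa0 xa]] /forallP blocks.
have vD a b : vv a b \in D.
  by case/and4P: tdD => _ _ _ /forallP/(_ a)/forallP/(_ b).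
have wu a b : (vw a b \in D) + \sum_c (vu a b c \in D) = 1.
  by have /eqP := blocks (a, b); rewrite /block vD /=; lia.
exists (a0, [ffun a => [ffun b => [pick c | vu a b c \in D]]]).
  rewrite inE; apply/forallP=> a /=.
  case/and4P: tdD => _ /forallP/(_ a) + _ _; rewrite (negbTE yD) /=.
  case/existsP=> b wD; apply/existsP; exists b.
  by rewrite !ffunE -(pick_of_sum_eq1 (wu a b)).1.
apply/setP=> -[[[[[]|a]|[a b]]|[a b]]|[[a b] c]]; rewrite inE /= ?ffunE.
- exact: negbTE yD.
- have [->|ne] := eqVneq a a0; first by case: (_ \in D) xa0.
  by have := xa a ne isT; case: (_ \in D).
- exact: (pick_of_sum_eq1 (wu a b)).1.
- exact: vD.
- exact: (pick_of_sum_eq1 (wu a b)).2.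
Qed.

Lemma card_admissible : #|admissible| = k * ((m + 1) ^ l - m ^ l) ^ k.
Proof.
set S := [set g : {ffun 'I_l -> option 'I_m} | [exists b, g b == None]].
have -> : admissible = setX [set: 'I_k] [set f | f \in ffun_on S].
  by apply/setP=> -[a f]; rewrite !inE; apply/forallP/ffun_onP=> fS b;
     move: (fS b); rewrite inE.
by rewrite cardsX cardsT cardsE card_ffun_on card_ffun_has_None !card_ord addn1.
Qed.

Lemma min_total_dominating_sets : 0 < m ->
  [set D | total_dominating (@Gadj k l m) D & #|D| == 2 * k * l + 1]
    = tdset @: admissible.
Proof.
move=> m_gt0; apply/setP=> D; rewrite inE total_dominating_GE //.
apply/andP/imsetP=> [[tdD /eqP] | [s adm ->]]; first exact: Gtotal_dom_min.
by rewrite tdset_Gtotal_dom // card_tdset.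
Qed.

End Tree.

Theorem mainTheorem5 (k l m : nat) (hk : 0 < k) (hl : 0 < l) (hm : 0 < m) :
  [/\ #|Gvtx k l m| = k * l * m + 2 * k * l + k + 1,
      gamma_t (@Gadj k l m) = 2 * k * l + 1
    & Gamma_t (@Gadj k l m) = k * ((m + 1) ^ l - m ^ l) ^ k].
Proof.
pose s0 : selection k l m := (Ordinal hk, [ffun=> [ffun=> None]]).
have s0_adm : s0 \in admissible k l m.
  rewrite inE; apply/forallP=> a; apply/existsP; exists (Ordinal hl).
  by rewrite !ffunE.
have gammaE : gamma_t (@Gadj k l m) = 2 * k * l + 1.
  apply: (gamma_t_eq (D0 := tdset s0)); last move=> D.
  - by rewrite total_dominating_GE // tdset_Gtotal_dom.
  - exact: card_tdset.
  - by rewrite total_dominating_GE // => /Gtotal_dom_card [].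
split=> //; first exact: card_Gvtx.
rewrite /Gamma_t gammaE min_total_dominating_sets //.
by rewrite (card_imset _ (@tdset_inj k l m)) card_admissible.
Qed.
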